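(* In the lower-bound instance for CTS-G described in the context, for any round $t>T/2$ such that $K_{t-1}\le0.5\,m(t-H)$, we have $|\bar G_t|\ge\frac m2$, where $\bar G_t:=\{a\in G: n_{a,t}\ge H\}$.
   Context: Top-$m$ instance: $N$ base arms with $N\ge400m$, $m\ge1$; every round any $m$ of the $N$ arms may be played. A set $G\subset[N]$ with $|G|=m$ is fixed; rewards are deterministic: $r_a=\Delta$ for $a\in G$ and $r_a=0$ otherwise, with $\Delta:=\frac45\sqrt{\frac{N\ln T}{T}}$ and $T>\frac{16}{25}N\ln T$. The agent runs CTS-G with $\gamma=1$: in round $t$ draw independently $w_{a,t}\sim\mathcal{N}\big(\hat r_{a,n_{a,t}},\frac{m\ln t}{n_{a,t}+1}\big)$ and play the $m$ arms with largest $w_{a,t}$; $n_{a,t}$ is the number of plays of $a$ in rounds $1,\dots,t-1$, $\hat r_{a,n_{a,t}}$ its empirical mean ($0$ if unplayed). $k_s$ is the number of arms of $[N]\setminus G$ played in round $s$, $K_{t-1}:=\sum_{s=1}^{t-1}k_s$, and $H:=\lceil64m\ln T/\Delta^2\rceil$. *)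

From HB Require Import structures.
From mathcomp Require Import all_boot all_order all_algebra.
From mathcomp Require Import reals exp.
Import Order.TTheory GRing.Theory Num.Theory.
Local Open Scope ring_scope.

(* Arms are 'I_N; rounds are t = 1, 2, ..., T.
   S t : the set of arms played in round t.
   z t a : the realization of the standard normal variable used to draw
           w_{a,t} ~ N(hat r, m ln t / (n+1)) as  hat r + sqrt(var) * z t a. *)

Definition Delta (R : realType) (N T : nat) : R :=
  4 / 5 * Num.sqrt (N%:R * ln T%:R / T%:R).

Definition Hpar (R : realType) (m N T : nat) : int :=
  Num.ceil (64 * m%:R * ln (T%:R : R) / (Delta R N T) ^+ 2).

Definition reward (R : realType) (N T : nat) (G : {set 'I_N}) (a : 'I_N) : R :=
  if a \in G then Delta R N T else 0.

Definition nplays (N : nat) (S : nat -> {set 'I_N}) (a : 'I_N) (t : nat) : nat :=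
  (\sum_(1 <= s < t) (a \in S s))%N.

Definition emp_mean (R : realType) (N T : nat) (G : {set 'I_N})
    (S : nat -> {set 'I_N}) (a : 'I_N) (t : nat) : R :=
  if nplays N S a t == 0%N then 0
  else (\sum_(1 <= s < t | a \in S s) reward R N T G a) / (nplays N S a t)%:R.

Definition wsample (R : realType) (m N T : nat) (G : {set 'I_N})
    (S : nat -> {set 'I_N}) (z : nat -> 'I_N -> R) (a : 'I_N) (t : nat) : R :=
  emp_mean R N T G S a t
  + Num.sqrt (m%:R * ln (t%:R : R) / (nplays N S a t).+1%:R) * z t a.

Definition ctsg_run (R : realType) (m N T : nat) (G : {set 'I_N})
    (S : nat -> {set 'I_N}) (z : nat -> 'I_N -> R) : Prop :=
  forall t : nat, (1 <= t <= T)%N ->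
    #|S t| = m /\
    (forall a b : 'I_N, a \in S t -> b \notin S t ->
       wsample R m N T G S z b t <= wsample R m N T G S z a t).

(* K_{t-1} = sum_{s=1}^{t-1} k_s, k_s = number of non-G arms played in round s *)
Definition Kcum (N : nat) (G : {set 'I_N}) (S : nat -> {set 'I_N}) (t : nat) : nat :=
  (\sum_(1 <= s < t) #|S s :\: G|)%N.

Definition Gbar (R : realType) (m N T : nat) (G : {set 'I_N})
    (S : nat -> {set 'I_N}) (t : nat) : {set 'I_N} :=
  [set a in G | (Hpar R m N T <= (nplays N S a t)%:Z)%R].

From HB Require Import structures.
From mathcomp Require Import all_boot all_order all_algebra.
From mathcomp Require Import reals exp.
From mathcomp Require Import ring lra zify.
Import Order.TTheory GRing.Theory Num.Theory.
Local Open Scope ring_scope.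

(* Every round plays exactly m arms, so sum_{a in G} n_{a,t} + K_{t-1} = m (t - 1).
   An arm of bar G_t has been played at most t - 1 times and any other arm of G
   at most H - 1 times, hence m (t - 1) - K_{t-1} <= |bar G_t| (t - 1)
   + (m - |bar G_t|) (H - 1), i.e. m (t - H) - K_{t-1} <= |bar G_t| (t - H).
   Since K_{t-1} <= m (t - H) / 2 and H < t (the ratio defining H is
   100 m T / N <= T / 4 < t), we get |bar G_t| >= m / 2. *)

Section PlayCounts.

Variables (N : nat) (S : nat -> {set 'I_N}).

Lemma nplays_le a t : (nplays N S a t <= t.-1)%N.
Proof.
rewrite /nplays -[t.-1]muln1 -[t.-1]subn1 -sum_nat_const_nat.
by apply: leq_sum => s _; case: (a \in S s).
Qed.

Lemma sum_nplays (A : {set 'I_N}) t :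
  (\sum_(a in A) nplays N S a t = \sum_(1 <= s < t) #|S s :&: A|)%N.
Proof.
rewrite exchange_big /=; apply: eq_bigr => s _.
rewrite -sum1_card big_mkcond [RHS]big_mkcond /=; apply: eq_bigr => a _.
by rewrite in_setI; case: (a \in S s); case: (a \in A).
Qed.

Lemma sum_nplays_addKcum m (G : {set 'I_N}) t :
  (forall s, (1 <= s < t)%N -> #|S s| = m) ->
  (\sum_(a in G) nplays N S a t + Kcum N G S t = t.-1 * m)%N.
Proof.
move=> cardS; rewrite sum_nplays /Kcum -big_split /=.
rewrite -[t.-1]subn1 -sum_nat_const_nat; apply: eq_big_nat => s st.
by rewrite cardsID cardS.
Qed.

End PlayCounts.

Lemma sum_le_heavy_light (R : realFieldType) (I : finType) (G g : {set I})
    (n : I -> R) (u v : R) :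
  g \subset G ->
  (forall a, a \in g -> n a <= u) -> (forall a, a \in G :\: g -> n a <= v) ->
  \sum_(a in G) n a <= #|g|%:R * u + (#|G|%:R - #|g|%:R) * v.
Proof.
move=> sub_gG le_u le_v.
have cardGg : #|G :\: g|%:R = #|G|%:R - #|g|%:R :> R.
  by rewrite -(cardsID g G) (setIidPr sub_gG) natrD addrC addKr.
rewrite (big_setID g) /= (setIidPr sub_gG) -cardGg.
by rewrite !mulr_natl -!sumr_const lerD // ler_sum.
Qed.

Section HparBound.

Variables (R : realType) (m N T : nat).
Hypotheses (m_gt0 : (0 < m)%N) (mN : (400 * m <= N)%N) (T_gt0 : (0 < T)%N).

Lemma Delta_sqr :
  Delta R N T ^+ 2 = 16 / 25 * (N%:R * ln (T%:R : R) / T%:R).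
Proof.
have lnT_ge0 : 0 <= ln (T%:R : R) by rewrite ln_ge0 // ler1n.
rewrite /Delta exprMn sqr_sqrtr ?divr_ge0 ?mulr_ge0 //.
by congr (_ * _); rewrite expr2; lra.
Qed.

Lemma Hpar_ratio_le :
  64 * m%:R * ln (T%:R : R) / Delta R N T ^+ 2 <= T%:R / 4.
Proof.
have T1 : (1 : R) <= T%:R by rewrite ler1n.
have m1 : (1 : R) <= m%:R by rewrite ler1n.
have N400 : 400 * m%:R <= N%:R :> R by rewrite -natrM ler_nat.
have [->|lnT_neq0] := eqVneq (ln (T%:R : R)) 0.
  by rewrite mulr0 mul0r divr_ge0.
have lnT_gt0 : 0 < ln (T%:R : R) by rewrite lt_def lnT_neq0 ln_ge0.
rewrite Delta_sqr ler_pdivrMr; last first.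
  by rewrite mulr_gt0 // divr_gt0 ?mulr_gt0 //; lra.
have -> : T%:R / 4 * (16 / 25 * (N%:R * ln T%:R / T%:R))
          = 4 / 25 * N%:R * ln (T%:R : R) :> R by field; lra.
nra.
Qed.

Lemma Hpar_lt t : (1 <= t)%N -> (T%:R : R) / 2 < t%:R -> Hpar R m N T < t%:Z.
Proof.
move=> t_ge1 Tt; suff : Hpar R m N T <= t%:Z - 1 by lia.
rewrite /Hpar ceil_le_int intrB /= -pmulrn.
have [T1|T_ge2] := leqP T 1.
  have -> : T = 1%N by lia.
  by rewrite ln1 mulr0 mul0r subr_ge0 ler1n.
have T2 : (2 : R) <= T%:R by rewrite ler_nat.
have t_ge2 : (2 : R) <= t%:R by rewrite ler_nat -(ltr_nat R); lra.
by apply: le_trans Hpar_ratio_le _; lra.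
Qed.

End HparBound.

Theorem lemma7 (R : realType) (N m T : nat) (G : {set 'I_N})
    (S : nat -> {set 'I_N}) (z : nat -> 'I_N -> R) (t : nat) :
  (1 <= m)%N ->
  (400 * m <= N)%N ->
  #|G| = m ->
  16 / 25 * (N%:R : R) * ln (T%:R : R) < T%:R ->
  ctsg_run R m N T G S z ->
  (1 <= t <= T)%N ->
  (T%:R : R) / 2 < t%:R ->
  ((Kcum N G S t)%:R : R) <= 1 / 2 * m%:R * (t%:R - (Hpar R m N T)%:~R) ->
  (m%:R : R) / 2 <= #|Gbar R m N T G S t|%:R.
Proof.
move=> m_gt0 mN cardG _ run /andP[t_ge1 tT] Tt HK.
set H := Hpar R m N T in HK *; set g := Gbar R m N T G S t.
have pred_t : (t.-1)%:R = t%:R - 1 :> R by rewrite -subn1 natrB.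
have H_lt_t : H%:~R < t%:R :> R.
  by rewrite pmulrn ltr_int Hpar_lt // (leq_trans t_ge1).
have count : \sum_(a in G) (nplays N S a t)%:R + (Kcum N G S t)%:R
             = (t%:R - 1) * m%:R :> R.
  rewrite -natr_sum -natrD (@sum_nplays_addKcum _ _ m) ?natrM ?pred_t //.
  move=> s /andP[s1 st].
  by case: (run s); rewrite // s1 (leq_trans (ltnW st)).
have bound : \sum_(a in G) (nplays N S a t)%:R
             <= #|g|%:R * (t%:R - 1) + (m%:R - #|g|%:R) * (H%:~R - 1) :> R.
  rewrite -cardG; apply: sum_le_heavy_light => [|a _|a].
  - by apply/subsetP => a; rewrite inE => /andP[].
  - by rewrite -pred_t ler_nat nplays_le.
  rewrite !inE negb_and => /andP[/orP[/negP //|] n_lt_H _].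
  rewrite -ltNge -lezD1 -(ler_int R) intrD in n_lt_H.
  by rewrite lerBrDr; exact: n_lt_H.
have : m%:R / 2 * (t%:R - H%:~R) <= #|g|%:R * (t%:R - H%:~R) :> R by lra.
by rewrite ler_pM2r ?subr_gt0.
Qed.
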